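(* Let $D\ge2$ be an integer, $x\ge0$, and set $\lambda^{(0)}_{kj}=\frac{1}{D^2+x}+\delta_{j0}\delta_{k0}\frac{x}{D^2+x}$ for $k,j\in\{0,\dots,D-1\}$. Define for $n\ge0$ the unnormalized quantities $$\lambda^{(n)}_{kj}=\sum_{k'=0}^{D-1}e^{-2\pi i kk'/D}\Big[\sum_{k''=0}^{D-1}e^{-2\pi i k''k'/D}\lambda^{(0)}_{k''j}\Big]^{2^n},$$ and normalize them to sum to 1 over all $k,j$. Then the normalized value is $$\lambda^{(n)}_{00}=\frac{(x+D)^{2^n}+(D-1)x^{2^n}}{D\big[(x+D)^{2^n}+(D-1)D^{2^n}\big]}.$$ In particular, for $x=D$ one has $\lambda^{(n)}_{00}=1/D$ for all $n$, i.e. it is a fixed point of the iteration.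
   Context: This iteration describes the action of $n$ rounds of a bipartite purification protocol for $D$-dimensional systems on a Bell-diagonal state with diagonal elements $\lambda_{kj}$; it is applied with $D=2^{N/2}$ to a maximally depolarized $N$-qubit linear cluster state split into two halves of $N/2$ qubits. *)

From mathcomp Require Import all_boot all_order all_algebra.
From mathcomp Require Import complex.
From mathcomp Require Import reals trigo.
Set Implicit Arguments. Unset Strict Implicit. Unset Printing Implicit Defensive.
Import Order.TTheory GRing.Theory Num.Theory.
Local Open Scope ring_scope.
Local Open Scope complex_scope.

Definition expi (R : realType) (t : R) : R[i] := (cos t +i* sin t)%C.

Definition phase (R : realType) (D a b : nat) : R[i] :=
  expi (- (2 * pi * (a * b)%:R / D%:R)).

Definition lam0 (R : realType) (D : nat) (x : R) (k j : nat) : R[i] :=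
  ((1 / ((D ^ 2)%:R + x) + ((k == 0%N) && (j == 0%N))%:R * (x / ((D ^ 2)%:R + x)))%:C)%C.

Definition lamU (R : realType) (D : nat) (x : R) (n k j : nat) : R[i] :=
  \sum_(k' < D) phase R D k k' *
     (\sum_(k'' < D) phase R D k'' k' * lam0 D x k'' j) ^+ (2 ^ n).

Definition lamN (R : realType) (D : nat) (x : R) (n k j : nat) : R[i] :=
  lamU D x n k j / (\sum_(k1 < D) \sum_(j1 < D) lamU D x n k1 j1).

(** The phases [phase D a b] are the characters of Z/DZ, so the inner and
    outer sums in [lamU] are discrete Fourier transforms.  The transform of a
    function of the form [u + [k = 0] v] is again of that form (character
    orthogonality), and so is its [2^n]-th power, hence every [lamU k j] has a
    closed form in which only the indices [k = 0] and [j = 0] are special.  Summing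
    the closed forms gives the normalisation, and the ratio simplifies after
    clearing the common factor [(D^2 + x)^(2^n)]. *)

From mathcomp Require Import all_boot all_order all_algebra.
From mathcomp Require Import complex.
From mathcomp Require Import reals trigo.
From mathcomp Require Import ring lra.
Import Order.TTheory GRing.Theory Num.Theory.
Set Implicit Arguments. Unset Strict Implicit. Unset Printing Implicit Defensive.
Local Open Scope ring_scope.
Local Open Scope complex_scope.

Section CharacterSums.
Variable R : realType.

Lemma expiD (a b : R) : expi (a + b) = expi a * expi b.
Proof. by rewrite /expi sinD cosD /=; congr Complex; ring. Qed.

Lemma expi0 : expi (0 : R) = 1.
Proof. by rewrite /expi cos0 sin0. Qed.

Lemma expiMn (t : R) (m : nat) : expi (m%:R * t) = expi t ^+ m.
Proof.
elim: m => [|m IHm]; first by rewrite mul0r expi0 expr0.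
by rewrite -addn1 natrD mulrDl mul1r expiD IHm exprD expr1.
Qed.

Variable D : nat.

Let omega (b : nat) : R[i] := expi (- (2 * pi * b%:R / D%:R)).

Lemma phaseE (a b : nat) : phase R D a b = omega b ^+ a.
Proof. by rewrite /phase /omega -expiMn natrM; congr expi; ring. Qed.

Lemma phaseC (a b : nat) : phase R D a b = phase R D b a.
Proof. by rewrite /phase mulnC. Qed.

Lemma phase0r (a : nat) : phase R D a 0 = 1.
Proof. by rewrite /phase muln0 mulr0 mul0r oppr0 expi0. Qed.

Lemma omega_expD (b : nat) : (0 < D)%N -> omega b ^+ D = 1.
Proof.
move=> D_gt0; rewrite /omega -expiMn.
have -> : D%:R * - (2 * pi * b%:R / D%:R) = b%:R * - (pi *+ 2) :> R.
  by rewrite mulrC mulNr -!mulrA mulVf ?pnatr_eq0 -?lt0n // mulr1; ring.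
by rewrite expiMn /expi cosN sinN cos2pi sin2pi oppr0 expr1n.
Qed.

Lemma omega_neq1 (b : nat) : (0 < b < D)%N -> omega b != 1.
Proof.
case/andP=> b_gt0 bD; rewrite /omega; set t := 2 * pi * b%:R / D%:R.
have pi_gt0 := @pi_gt0 R.
have D_gt0 : (0 : R) < D%:R by rewrite ltr0n (leq_ltn_trans _ bD).
have t_gt0 : 0 < t by rewrite /t divr_gt0 // !mulr_gt0 // ltr0n.
have t_lt2pi : t < pi *+ 2.
  rewrite /t ltr_pdivrMr // (_ : pi *+ 2 * D%:R = 2 * pi * D%:R); last by ring.
  by rewrite ltr_pM2l ?ltr_nat // mulr_gt0.
apply/negP => /eqP [].
rewrite cosN sinN => cos_t /eqP; rewrite oppr_eq0 => /eqP sin_t.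
case: (ltgtP t pi) => [t_ltpi|pi_ltt|t_pi].
- by have := @sin_gt0_pi R t; rewrite t_gt0 t_ltpi sin_t ltxx => /(_ isT).
- have : 0 < sin (t - pi) by apply: sin_gt0_pi; rewrite subr_gt0 pi_ltt ltrBlDr -mulr2n.
  by rewrite -oppr_lt0 -sinDpi subrK sin_t ltxx.
- by move: cos_t; rewrite t_pi cospi; lra.
Qed.

Lemma sum_phase (b : nat) : (b < D)%N ->
  \sum_(a < D) phase R D a b = (b == 0%N)%:R * D%:R.
Proof.
move=> bD; have [->|b_neq0] := eqVneq b 0%N.
  by under eq_bigr => a _ do rewrite phase0r; rewrite sumr_const card_ord mul1r.
under eq_bigr => a _ do rewrite phaseE.
have := subrX1 (omega b) D; rewrite omega_expD ?subrr; last exact: leq_ltn_trans bD.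
move/esym/eqP; rewrite mulf_eq0 subr_eq0 (negbTE (omega_neq1 _)) ?lt0n ?b_neq0 //=.
by move/eqP ->; rewrite mul0r.
Qed.
End CharacterSums.

Lemma expr_add_indicator (T : pzRingType) (a c : T) (b : bool) (m : nat) :
  (a + b%:R * c) ^+ m = a ^+ m + b%:R * ((a + c) ^+ m - a ^+ m).
Proof. by case: b; rewrite ?mul1r ?mul0r ?addr0 // [RHS]addrC subrK. Qed.

Lemma sum_const_indicator (T : pzRingType) (D : nat) (u v : T) : (0 < D)%N ->
  \sum_(i < D) (u + ((i : nat) == 0%N)%:R * v) = D%:R * u + v.
Proof.
case: D => // D _; rewrite big_split /= sumr_const card_ord mulr_natl big_ord_recl /=.
by rewrite mul1r big1 ?addr0 // => i _; rewrite mul0r.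
Qed.

Section FourierTransform.
Variables (R : realType) (D : nat).

Lemma dft_const_indicator (k : nat) (u v : R) : (k < D)%N ->
  \sum_(k' < D) phase R D k k' * (u + ((k' : nat) == 0%N)%:R * v)%:C
  = (v + (k == 0%N)%:R * (u * D%:R))%:C.
Proof.
move=> kD; under eq_bigr => k' _ do rewrite rmorphD mulrDr.
rewrite big_split /= -mulr_suml.
under [X in X * _]eq_bigr => k' _ do rewrite phaseC.
rewrite sum_phase // [RHS]rmorphD [RHS]addrC; congr (_ + _).
  by rewrite !rmorphM /= !rmorph_nat [u%:C * _]mulrC mulrA.
case: D kD => // D' _; rewrite big_ord_recl /= phase0r !mul1r big1 ?addr0 //.
by move=> i _; rewrite mul0r rmorph0 mulr0.
Qed.
End FourierTransform.

Section BellDiagonalCoefficients.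
Variables (R : realType) (D : nat) (x : R).
Hypothesis D_gt0 : (0 < D)%N.

Local Notation s := ((D ^ 2)%:R + x).

Lemma lam0E (k j : nat) :
  lam0 D x k j = (1 / s + (k == 0%N)%:R * ((j == 0%N)%:R * (x / s)))%:C.
Proof. by rewrite /lam0 -mulnb natrM !mulrA. Qed.

Lemma dft_lam0 (k' j : nat) : (k' < D)%N ->
  \sum_(k'' < D) phase R D k'' k' * lam0 D x k'' j
  = ((j == 0%N)%:R * (x / s) + (k' == 0%N)%:R * (1 / s * D%:R))%:C.
Proof.
move=> k'D; under eq_bigr => k'' _ do rewrite lam0E phaseC.
exact: dft_const_indicator.
Qed.

Lemma lamUE (n k j : nat) : (k < D)%N ->
  let a := (j == 0%N)%:R * (x / s) in
  lamU D x n k j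
  = ((a + 1 / s * D%:R) ^+ (2 ^ n) - a ^+ (2 ^ n)
     + (k == 0%N)%:R * (a ^+ (2 ^ n) * D%:R))%:C.
Proof.
move=> kD a; rewrite /lamU.
under eq_bigr => k' _ do rewrite dft_lam0 // -rmorphXn expr_add_indicator.
exact: dft_const_indicator.
Qed.

Lemma sum_lamU (n : nat) :
  \sum_(k < D) \sum_(j < D) lamU D x n k j
  = (D%:R * (D%:R * (1 / s * D%:R) ^+ (2 ^ n)
       + ((1 / s * D%:R + x / s) ^+ (2 ^ n) - (1 / s * D%:R) ^+ (2 ^ n))))%:C.
Proof.
rewrite exchange_big /=.
under eq_bigr => j _ do under eq_bigr => k _ do rewrite lamUE //.
under eq_bigr => j _ do rewrite -rmorph_sum sum_const_indicator //.
have rowE (j : nat) : let a := (j == 0%N)%:R * (x / s) in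
    D%:R * ((a + 1 / s * D%:R) ^+ (2 ^ n) - a ^+ (2 ^ n)) + a ^+ (2 ^ n) * D%:R
    = D%:R * (1 / s * D%:R + (j == 0%N)%:R * (x / s)) ^+ (2 ^ n).
  by move=> a; rewrite [_ + 1 / s * _]addrC; ring.
under eq_bigr => j _ do rewrite rowE expr_add_indicator.
by rewrite -rmorph_sum -mulr_sumr sum_const_indicator.
Qed.
End BellDiagonalCoefficients.

Lemma normalized_ratio (F : fieldType) (m : nat) (s x D : F) :
  s != 0 -> D != 0 -> (x + D) ^+ m + (D - 1) * D ^+ m != 0 ->
  ((x / s + s^-1 * D) ^+ m - (x / s) ^+ m + (x / s) ^+ m * D)
    / (D * (D * (s^-1 * D) ^+ m + ((s^-1 * D + x / s) ^+ m - (s^-1 * D) ^+ m)))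
  = ((x + D) ^+ m + (D - 1) * x ^+ m) / (D * ((x + D) ^+ m + (D - 1) * D ^+ m)).
Proof.
move=> s_neq0 D_neq0 den_neq0.
rewrite [s^-1 * D]mulrC [D / s + _]addrC -!mulrDl !expr_div_n.
have sm_neq0 : s ^+ m != 0 by rewrite expf_neq0.
move: den_neq0 sm_neq0.
set A := (x + D) ^+ m; set B := x ^+ m; set C := D ^+ m; set S := s ^+ m.
by move=> den_neq0 sm_neq0; field; rewrite den_neq0 D_neq0 sm_neq0.
Qed.

Lemma norm_factor_gt0 (R : realFieldType) (D m : nat) (x : R) :
  (0 < D)%N -> 0 <= x -> 0 < (x + D%:R) ^+ m + (D%:R - 1) * D%:R ^+ m.
Proof.
move=> D_gt0 x_ge0; rewrite ltr_wpDr ?exprn_gt0 ?ltr_wpDl ?ltr0n //.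
by rewrite mulr_ge0 ?exprn_ge0 // subr_ge0 ler1n.
Qed.

Lemma lamN00E (R : realType) (D : nat) (x : R) (n : nat) :
  (0 < D)%N -> 0 <= x ->
  lamN D x n 0 0 =
  (((x + D%:R) ^+ (2 ^ n) + (D%:R - 1) * x ^+ (2 ^ n)) /
   (D%:R * ((x + D%:R) ^+ (2 ^ n) + (D%:R - 1) * D%:R ^+ (2 ^ n))))%:C.
Proof.
move=> D_gt0 x_ge0; rewrite /lamN lamUE // sum_lamU // -fmorph_div !mul1r.
rewrite normalized_ratio ?pnatr_eq0 -?lt0n // gt_eqF ?norm_factor_gt0 //.
by rewrite ltr_wpDr // ltr0n expn_gt0 D_gt0.
Qed.

Theorem mainTheorem10 (R : realType) (D : nat) (x : R) :
  (2 <= D)%N -> 0 <= x ->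
  (forall n : nat,
     lamN D x n 0 0 =
     (((x + D%:R) ^+ (2 ^ n) + (D%:R - 1) * x ^+ (2 ^ n)) /
      (D%:R * ((x + D%:R) ^+ (2 ^ n) + (D%:R - 1) * D%:R ^+ (2 ^ n))))%:C%C)
  /\ (x = D%:R -> forall n : nat, lamN D x n 0 0 = (1 / D%:R)%:C%C).
Proof.
move=> D_ge2 x_ge0; have D_gt0 : (0 < D)%N by apply: leq_trans D_ge2.
split=> [n|x_eqD n]; first exact: lamN00E.
have := norm_factor_gt0 (2 ^ n) D_gt0 x_ge0.
rewrite lamN00E // x_eqD => /lt0r_neq0 norm_neq0.
by rewrite invfM mulrCA divff // mulr1 div1r.
Qed.
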